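(* Let $p \geq 2$ be an integer and let $U_p=\bigcup_{n\in 2\mathbb Z_+}\mathbb Z_p^n$. Let $\boldsymbol a,\boldsymbol b\in U_p$ be equivalent (in the sense defined in the context). Then $\tau_p(\boldsymbol a)=\tau_p(\boldsymbol b)$.
   Context: $\mathbb Z_+$ denotes the positive integers and $\mathbb Z_p=\mathbb Z/p\mathbb Z$. Two elements of $U_p$ are called equivalent if they are related by a finite sequence of the following transformations of $(a_1,\ldots,a_n)\in\mathbb Z_p^n$ ($n$ even): (Op1) $(a_1,\ldots,a_n)\to(a_2,\ldots,a_n,a_1)$; (Op2) $(a_1,\ldots,a_n)\to(a, a_2+(-1)^2(a_1-a),\ldots,a_i+(-1)^i(a_1-a),\ldots,a_n+(-1)^n(a_1-a))$ for any $a\in\mathbb Z_p$; (Op3) $(a_1,\ldots,a_n)\to(a, a_1-a_2+a,\ldots,a_1-a_i+a,\ldots,a_1-a_n+a)$ for any $a\in\mathbb Z_p$; (Op4) $(a_1,\ldots,a_n)\to(a_1,-a_1+a_2+a_3,a_3,\ldots,a_n)$ when $n>3$. For $\boldsymbol a=(a_1,\ldots,a_n)\in U_p$, $\tau_p(\boldsymbol a)$ is the maximum of all $k\in\{1,\ldots,p\}$ such that $k\mid p$ and $a_1+a_2\equiv a_2+a_3\equiv\cdots\equiv a_{n-1}+a_n\equiv a_n+a_1 \pmod k$ (congruence mod $k$ is well defined on $\mathbb Z_p$ since $k\mid p$). *)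

From mathcomp Require Import all_boot all_order all_algebra.
From Stdlib Require Import Relations.
Set Implicit Arguments. Unset Strict Implicit. Unset Printing Implicit Defensive.
Import GRing.Theory.
Local Open Scope ring_scope.

(* U_p : tuples over Z_p of even positive length, represented as sequences.
   Sequences are 0-indexed: a`_j is a_{j+1} of the paper. *)
Definition inU (p : nat) (a : seq 'Z_p) : bool :=
  (0 < size a)%N && ~~ odd (size a).

Definition op1 (p : nat) (a : seq 'Z_p) : seq 'Z_p := rot 1 a.

Definition op2 (p : nat) (x : 'Z_p) (a : seq 'Z_p) : seq 'Z_p :=
  mkseq (fun j => a`_j + (-1) ^+ j.+1 * (a`_0 - x)) (size a).

Definition op3 (p : nat) (x : 'Z_p) (a : seq 'Z_p) : seq 'Z_p :=
  mkseq (fun j => a`_0 - a`_j + x) (size a).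

Definition op4 (p : nat) (a : seq 'Z_p) : seq 'Z_p :=
  set_nth 0 a 1 (- a`_0 + a`_1 + a`_2).

Inductive op_step (p : nat) : seq 'Z_p -> seq 'Z_p -> Prop :=
| step1 a : op_step (a) (op1 a)
| step2 x a : op_step a (op2 x a)
| step3 x a : op_step a (op3 x a)
| step4 a : (3 < size a)%N -> op_step a (op4 a).

Definition equivU (p : nat) (a b : seq 'Z_p) : Prop :=
  clos_refl_sym_trans (seq 'Z_p) (@op_step p) a b.

Definition congr_mod (p k : nat) (x y : 'Z_p) : bool :=
  ((val x) %% k == (val y) %% k)%N.

Definition consec_congr (p k : nat) (a : seq 'Z_p) : bool :=
  let n := size a in
  all (fun j => congr_mod k (a`_j + a`_((j.+1) %% n)) (a`_0 + a`_(1 %% n)))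
      (iota 0 n).

Definition tau (p : nat) (a : seq 'Z_p) : nat :=
  \max_(k < p.+1 | (0 < k)%N && (k %| p)%N && consec_congr k a) k.

From mathcomp Require Import all_boot all_order all_algebra.
From mathcomp Require Import ring.
Set Implicit Arguments.
Unset Strict Implicit.
Unset Printing Implicit Defensive.
Import GRing.Theory.
Local Open Scope ring_scope.

(* For k | p, k is admissible in the maximum defining tau_p(a) exactly when
   the cyclic sums s_i = a_i + a_(i+1) (indices mod n) are pairwise congruent
   mod k.  Each operation acts on the sequence of cyclic sums in a way that
   preserves this: Op1 rotates it, Op2 fixes it (n is even, so the signs
   (-1)^i and (-1)^(i+1) cancel also at i = n), Op3 maps every s_i to
   2 (a_1 + x) - s_i, and Op4 replaces (s_1, s_2, ...) by
   (s_2, 2 s_2 - s_1, ...).  Hence the admissible k, and so tau, are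
   invariant under equivalence. *)

Lemma all2rel_equiv (T : eqType) (r : rel T) (x : T) (s : seq T) :
  equivalence_rel r -> x \in s -> all2rel r s = all (r x) s.
Proof.
move=> r_equiv xs; apply/allrelP/allP => [rs y ys | rxs y z ys zs].
  exact: rs.
by rewrite -(r_equiv x y z).2 ?rxs.
Qed.

Lemma all2rel_mem_eq (T : eqType) (r : rel T) (s t : seq T) :
  s =i t -> all2rel r s = all2rel r t.
Proof.
move=> st; apply/allrelP/allrelP => rs x y xs ys; apply: rs;
  by rewrite ?st // -st.
Qed.

Lemma nth_rot1 (T : Type) (x0 : T) (s : seq T) i : (i < size s)%N ->
  nth x0 (rot 1 s) i = nth x0 s (i.+1 %% size s).
Proof.
case: s => [|x s] //= lt_i_s; rewrite rot1_cons nth_rcons.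
case: ltngtP => [lt_i|gt_i|->]; last by rewrite modnn.
- by rewrite modn_small.
- by rewrite ltnS leqNgt gt_i in lt_i_s.
Qed.

Section CongrMod.

Variables (p k : nat).
Hypotheses (p_gt1 : (1 < p)%N) (k_dvd_p : (k %| p)%N).

Lemma congr_mod_refl (x : 'Z_p) : congr_mod k x x.
Proof. by rewrite /congr_mod. Qed.

Lemma congr_mod_equiv : equivalence_rel (@congr_mod p k).
Proof. by rewrite /congr_mod => x y z; split=> // /eqP ->. Qed.

Lemma congr_modD (x x' y y' : 'Z_p) :
  congr_mod k x x' -> congr_mod k y y' -> congr_mod k (x + y) (x' + y').
Proof.
have k_dvd : (k %| (Zp_trunc p).+2)%N by rewrite (Zp_cast p_gt1).
rewrite /congr_mod /= !modn_dvdm // => /eqP xx' /eqP yy'.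
by rewrite -modnDm xx' yy' modnDm.
Qed.

Lemma congr_modN (x y : 'Z_p) : congr_mod k x y -> congr_mod k (- x) (- y).
Proof.
move=> xy; have := congr_modD (congr_mod_refl (- x - y)) xy.
rewrite (_ : - x - y + x = - y); last by ring.
rewrite (_ : - x - y + y = - x); last by ring.
by rewrite /congr_mod eq_sym.
Qed.

Lemma congr_modBl (c x y : 'Z_p) :
  congr_mod k (c - x) (c - y) = congr_mod k x y.
Proof.
apply/idP/idP => [cxy | xy].
  have := congr_modN (congr_modD (congr_mod_refl (- c)) cxy).
  by rewrite !addKr !opprK.
exact: congr_modD (congr_mod_refl c) (congr_modN xy).
Qed.

End CongrMod.

Section CyclicSums.

Variable p : nat.
Implicit Types (a : seq 'Z_p) (x : 'Z_p).

Definition cyclic_sums a : seq 'Z_p :=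
  mkseq (fun j => a`_j + a`_(j.+1 %% size a)) (size a).

Lemma size_cyclic_sums a : size (cyclic_sums a) = size a.
Proof. exact: size_mkseq. Qed.

Lemma nth_cyclic_sums a j : (j < size a)%N ->
  (cyclic_sums a)`_j = a`_j + a`_(j.+1 %% size a).
Proof. exact: nth_mkseq. Qed.

Lemma size_op4 a : (1 < size a)%N -> size (op4 a) = size a.
Proof. by move=> a_gt1; rewrite /op4 size_set_nth; apply/maxn_idPr. Qed.

Lemma consec_congrE k a : (0 < size a)%N ->
  consec_congr k a = all2rel (congr_mod k) (cyclic_sums a).
Proof.
move=> a_gt0; have sum0 : (cyclic_sums a)`_0 \in cyclic_sums a.
  by rewrite mem_nth ?size_cyclic_sums.
rewrite (all2rel_equiv (@congr_mod_equiv p k) sum0).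
rewrite /consec_congr /cyclic_sums /mkseq all_map nth_cyclic_sums //.
by apply: eq_all => j; rewrite /= /congr_mod eq_sym.
Qed.

Lemma cyclic_sums_rot1 a : cyclic_sums (rot 1 a) = rot 1 (cyclic_sums a).
Proof.
apply: (@eq_from_nth _ 0) => [|j].
  by rewrite size_cyclic_sums !size_rot size_cyclic_sums.
rewrite size_cyclic_sums size_rot => ja.
have a_gt0 : (0 < size a)%N by apply: leq_ltn_trans ja.
rewrite nth_cyclic_sums ?size_rot // !nth_rot1 ?size_cyclic_sums ?ltn_pmod //.
by rewrite nth_cyclic_sums ?ltn_pmod.
Qed.

Lemma cyclic_sums_op2 x a :
  ~~ odd (size a) -> cyclic_sums (op2 x a) = cyclic_sums a.
Proof.
move=> even_a; apply: (@eq_from_nth _ 0) => [|j];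
  rewrite !size_cyclic_sums /op2 size_mkseq // => ja.
have a_gt0 : (0 < size a)%N by apply: leq_ltn_trans ja.
rewrite !nth_cyclic_sums ?size_mkseq // !nth_mkseq ?ltn_pmod //.
suff sign_cancel : (-1) ^+ j.+1 + (-1) ^+ (j.+1 %% size a).+1 = 0 :> 'Z_p.
  by rewrite addrACA -mulrDl sign_cancel mul0r addr0.
case: (ltngtP j.+1 (size a)) => [lt_j1a | gt_j1a | j1a].
- by rewrite modn_small // [X in _ + X]exprS mulN1r addrN.
- by rewrite ltnS leqNgt ja in gt_j1a.
- by rewrite -signr_odd j1a modnn (negbTE even_a) addrN.
Qed.

Lemma cyclic_sums_op3 x a :
  cyclic_sums (op3 x a) = map (fun s => (a`_0 + x) *+ 2 - s) (cyclic_sums a).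
Proof.
apply: (@eq_from_nth _ 0) => [|j].
  rewrite size_cyclic_sums /op3 size_mkseq.
  by rewrite (size_map _ (cyclic_sums a)) size_cyclic_sums.
rewrite size_cyclic_sums /op3 size_mkseq => ja.
have a_gt0 : (0 < size a)%N by apply: leq_ltn_trans ja.
rewrite (nth_map 0 _ _ (s := cyclic_sums a)) ?size_cyclic_sums //.
rewrite !nth_cyclic_sums ?size_mkseq //.
by rewrite !nth_mkseq ?ltn_pmod //; ring.
Qed.

Lemma cyclic_sums_op4 a s0 s1 t : (3 < size a)%N ->
  cyclic_sums a = [:: s0, s1 & t] ->
  cyclic_sums (op4 a) = [:: s1, s1 *+ 2 - s0 & t].
Proof.
move=> a_gt3 sums_a.
have a_gt2 : (2 < size a)%N := ltnW a_gt3.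
have a_gt1 : (1 < size a)%N := ltnW a_gt2.
have a_gt0 : (0 < size a)%N := ltnW a_gt1.
have nth_op4 i : (op4 a)`_i = if i == 1%N then - a`_0 + a`_1 + a`_2 else a`_i.
  exact: nth_set_nth.
have nth_sums i :
    (i < size a)%N -> [:: s0, s1 & t]`_i = a`_i + a`_(i.+1 %% size a).
  by move=> ia; rewrite -sums_a nth_cyclic_sums.
have s0E : s0 = a`_0 + a`_1.
  by have /= := nth_sums 0%N a_gt0; rewrite modn_small.
have s1E : s1 = a`_1 + a`_2.
  by have /= := nth_sums 1%N a_gt1; rewrite modn_small.
apply: (@eq_from_nth _ 0) => [|j]; rewrite size_cyclic_sums size_op4 //.
  by rewrite -(size_cyclic_sums a) sums_a.
move=> ja; rewrite nth_cyclic_sums size_op4 // !nth_op4.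
case: j ja => [|[|j]] ja.
- by rewrite modn_small //= s1E; ring.
- by rewrite modn_small //= s0E s1E; ring.
- have -> : (j.+3 %% size a == 1)%N = false.
    case: (ltngtP j.+3 (size a)) => [lt_j3a | gt_j3a | ->].
    + by rewrite modn_small.
    + by rewrite ltnS leqNgt ja in gt_j3a.
    + by rewrite modnn.
  by rewrite /= -[t`_j]/([:: s0, s1 & t]`_j.+2) nth_sums.
Qed.

End CyclicSums.

Section Invariance.

Variables (p k : nat).
Hypotheses (p_gt1 : (1 < p)%N) (k_dvd_p : (k %| p)%N).

Lemma size_op_step (a b : seq 'Z_p) : op_step a b -> size b = size a.
Proof.
case=> {a b} [a|x a|x a|a a_gt3]; rewrite ?size_rot ?size_mkseq //.
by rewrite size_op4 // ltnW // ltnW.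
Qed.

Lemma consec_congr_op_step (a b : seq 'Z_p) :
  inU a -> op_step a b -> consec_congr k b = consec_congr k a.
Proof.
case/andP=> a_gt0 even_a ab.
rewrite !consec_congrE ?(size_op_step ab) //; clear a_gt0.
case: {b}ab even_a => [{}a _ | x {}a even_a | x {}a _ | {}a a_gt3 _].
- by apply: all2rel_mem_eq => s; rewrite cyclic_sums_rot1 mem_rot.
- by rewrite cyclic_sums_op2.
- rewrite cyclic_sums_op3 allrel_mapl allrel_mapr.
  by apply: eq_allrel => u v; apply: congr_modBl.
- have : (1 < size (cyclic_sums a))%N.
    by rewrite size_cyclic_sums (ltn_trans _ a_gt3).
  case sums_a: (cyclic_sums a) => [|s0 [|s1 t]] // _.
  rewrite (cyclic_sums_op4 a_gt3 sums_a).
  rewrite !(all2rel_equiv (x := s1) (@congr_mod_equiv p k)) ?inE ?eqxx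
    ?orbT //=.
  rewrite -(congr_modBl p_gt1 k_dvd_p (s1 *+ 2) s1 s0) mulr2n addrK.
  by rewrite !congr_mod_refl.
Qed.

Lemma equivU_size (a b : seq 'Z_p) : equivU a b -> size b = size a.
Proof.
elim=> {a b} [a b /size_op_step | a | a b _ <- | a b c _ -> _ ->] //.
Qed.

Lemma equivU_consec_congr (a b : seq 'Z_p) :
  inU a -> equivU a b -> consec_congr k a = consec_congr k b.
Proof.
move=> aU ab; elim: ab aU => {a b}
  [a b ab | a | a b ab IH | a b c ab IHab bc IHbc] aU.
- exact/esym/(consec_congr_op_step aU ab).
- by [].
- by rewrite IH // /inU -(equivU_size ab).
- by rewrite IHab // IHbc // /inU (equivU_size ab).
Qed.

End Invariance.

Theorem mainTheorem1 (p : nat) (hp : (2 <= p)%N) (a b : seq 'Z_p) :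
  inU a -> inU b -> equivU a b -> tau a = tau b.
Proof.
move=> aU _ ab; apply: eq_bigl => k.
case: (boolP (k %| p)%N) => [k_dvd_p | _]; last by rewrite andbF !andFb.
by rewrite (equivU_consec_congr hp k_dvd_p aU ab).
Qed.
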